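(* Let $(\vdash,\overline{\cdot},\widehat{\cdot})$ be a setting satisfying Pre-Relevance, let $\mathcal{S}_1,\mathcal{S}_2\subseteq\mathcal{L}$ with $\mathcal{S}_1\mid\mathcal{S}_2$, and let $a,b\in\mathit{Arg}_{\vdash}(\mathcal{S}_1\cup\mathcal{S}_2)$ with $\mathsf{Supp}(b)=\Theta$ such that $b$ attacks $a$. Then: (1) some $b'\in\mathit{Arg}_{\vdash}(\mathcal{S}_1\cap\Theta)\cup\mathit{Arg}_{\vdash}(\mathcal{S}_2\cap\Theta)$ attacks $a$; (2) if $a\in\mathit{Arg}_{\vdash}(\mathcal{S}_1)$, some $b'\in\mathit{Arg}_{\vdash}(\mathcal{S}_1\cap\Theta)$ attacks $a$.
   Context: $\mathcal{L}$ is the set of formulas of a language built from propositional atoms; $\mathsf{Atoms}(\mathcal{S})$ is the set of atoms occurring in $\mathcal{S}$, and $\mathcal{S}_1\mid\mathcal{S}_2$ means $\mathsf{Atoms}(\mathcal{S}_1)\cap\mathsf{Atoms}(\mathcal{S}_2)=\emptyset$. A setting is $(\vdash,\overline{\cdot},\widehat{\cdot})$ with ${\vdash}\subseteq\wp_{\sf fin}(\mathcal{L})\times\mathcal{L}$ arbitrary, $\overline{\cdot}:\mathcal{L}\to\wp(\mathcal{L})$, $\widehat{\cdot}$ assigning to each nonempty finite set a finite set of formulas, with $\widehat{\emptyset}=\emptyset$. $\mathit{Arg}_{\vdash}(\mathcal{S})=\{(\Gamma,\gamma):\Gamma\subseteq\mathcal{S}\text{ finite},\Gamma\vdash\gamma\}$,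 $\mathsf{Supp}((\Gamma,\gamma))=\Gamma$; $(\Gamma,\gamma)$ attacks $(\Gamma',\gamma')$ iff $\gamma\in\overline{\phi}$ for some $\phi\in\widehat{\Gamma'}$. Pre-Relevance of the setting: (a) for all $\mathcal{S}_1,\mathcal{S}_2,\phi$ with $\mathcal{S}_1\cup\{\phi\}\mid\mathcal{S}_2$, $\mathcal{S}_1\cup\mathcal{S}_2\vdash\phi$ implies $\mathcal{S}_1'\vdash\phi$ for some $\mathcal{S}_1'\subseteq\mathcal{S}_1$; (b) primeness: for all sets of atoms $\mathcal{A}_1\mid\mathcal{A}_2$, all finite $\mathcal{S}_1,\mathcal{T}_1,\mathcal{S}_2,\mathcal{T}_2$ with $\mathsf{Atoms}(\mathcal{S}_i),\mathsf{Atoms}(\mathcal{T}_i)\subseteq\mathcal{A}_i$, and all $\phi,\psi$ with $\psi\in\overline{\phi}$, $\phi\in\widehat{\mathcal{T}_1\cup\mathcal{T}_2}$: if $\mathcal{S}_1\cup\mathcal{S}_2\vdash\psi$ then there are $i\in\{1,2\}$, $\mathcal{S}_i'\subseteq\mathcal{S}_i$, $\phi_i\in\widehat{\mathcal{T}_i}$, $\psi_i\in\overline{\phi_i}$ with $\mathcal{S}_i'\vdash\psi_i$; (c) $\widehat{\Delta}\subseteq\widehat{\Delta\cup\Delta'}$ for all finite $\Delta,\Delta'$. *)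

From mathcomp Require Import all_boot.
From mathcomp Require Import boolp classical_sets cardinality.
Set Implicit Arguments. Unset Strict Implicit. Unset Printing Implicit Defensive.
Local Open Scope classical_set_scope.

Section Defs.
Variables (Atom Form : Type) (atoms : Form -> set Atom).

Definition Atoms (S : set Form) : set Atom := \bigcup_(f in S) atoms f.

Definition atom_disjoint (S1 S2 : set Form) : Prop :=
  Atoms S1 `&` Atoms S2 = set0.

(* A setting (|-, bar, hat).  |- relates only finite sets of formulas to
   formulas; hat maps finite sets to finite sets and hat(empty) = empty.
   (Values of hat on infinite sets are irrelevant junk.) *)
Record setting := Setting {
  der : set Form -> Form -> Prop;
  bar : Form -> set Form;
  hat : set Form -> set Form;
  der_fin : forall G g, der G g -> finite_set G;
  hat_fin : forall D, finite_set D -> finite_set (hat D);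
  hat0 : hat set0 = set0
}.

Variable st : setting.

Definition argument := (set Form * Form)%type.

Definition Arg (S : set Form) : set argument :=
  [set a | finite_set a.1 /\ a.1 `<=` S /\ der st a.1 a.2].

Definition Supp (a : argument) : set Form := a.1.

Definition attacks (b a : argument) : Prop :=
  exists phi, hat st (Supp a) phi /\ bar st phi b.2.

Definition pre_relevance : Prop :=
  (forall (S1 S2 : set Form) (phi : Form),
      atom_disjoint (S1 `|` [set phi]) S2 ->
      der st (S1 `|` S2) phi ->
      exists S1', S1' `<=` S1 /\ der st S1' phi) /\
  (forall (A1 A2 : set Atom) (S1 T1 S2 T2 : set Form) (phi psi : Form),
      A1 `&` A2 = set0 ->
      finite_set S1 -> finite_set T1 -> finite_set S2 -> finite_set T2 ->
      Atoms S1 `<=` A1 -> Atoms T1 `<=` A1 ->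
      Atoms S2 `<=` A2 -> Atoms T2 `<=` A2 ->
      bar st phi psi -> hat st (T1 `|` T2) phi ->
      der st (S1 `|` S2) psi ->
      (exists S1' phi1 psi1, S1' `<=` S1 /\ hat st T1 phi1 /\
                             bar st phi1 psi1 /\ der st S1' psi1) \/
      (exists S2' phi2 psi2, S2' `<=` S2 /\ hat st T2 phi2 /\
                             bar st phi2 psi2 /\ der st S2' psi2)) /\
  (forall D D' : set Form, finite_set D -> finite_set D' ->
      hat st D `<=` hat st (D `|` D')).

End Defs.

From mathcomp Require Import all_boot.
From mathcomp Require Import boolp classical_sets cardinality.
Local Open Scope classical_set_scope.

(* Split the support of a into T1 := Supp a ∩ S1 and T2 := Supp a ∩ S2, and
   the support of the attacker b along S1 and S2.  Primeness then yields a
   subargument of b built from one side only that attacks the matching part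
   of Supp a, and monotonicity of hat upgrades this to an attack on a.  For
   (2) take T1 := Supp a and T2 := ∅: the second alternative of primeness
   would attack hat ∅ = ∅, so it cannot occur. *)

Section Relevance.
Set Implicit Arguments. Unset Strict Implicit.
Variables (Atom Form : Type) (atoms : Form -> set Atom) (st : setting Form).

Definition primeness : Prop :=
  forall (A1 A2 : set Atom) (S1 T1 S2 T2 : set Form) (phi psi : Form),
    A1 `&` A2 = set0 ->
    finite_set S1 -> finite_set T1 -> finite_set S2 -> finite_set T2 ->
    Atoms atoms S1 `<=` A1 -> Atoms atoms T1 `<=` A1 ->
    Atoms atoms S2 `<=` A2 -> Atoms atoms T2 `<=` A2 ->
    bar st phi psi -> hat st (T1 `|` T2) phi ->
    der st (S1 `|` S2) psi ->
    (exists S1' phi1 psi1, S1' `<=` S1 /\ hat st T1 phi1 /\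
                           bar st phi1 psi1 /\ der st S1' psi1) \/
    (exists S2' phi2 psi2, S2' `<=` S2 /\ hat st T2 phi2 /\
                           bar st phi2 psi2 /\ der st S2' psi2).

Definition hat_monotone : Prop :=
  forall D D' : set Form, finite_set D -> finite_set D' ->
    hat st D `<=` hat st (D `|` D').

Lemma pre_relevance_primeness : pre_relevance atoms st -> primeness.
Proof. by case=> _ []. Qed.

Lemma pre_relevance_hat_monotone : pre_relevance atoms st -> hat_monotone.
Proof. by case=> _ []. Qed.

Definition attacks_on (c : argument Form) (T : set Form) : Prop :=
  exists phi, hat st T phi /\ bar st phi c.2.

Lemma attacksE (b a : argument Form) : attacks st b a = attacks_on b (Supp a).
Proof. by []. Qed.

Lemma attacks_on_set0 (c : argument Form) : ~ attacks_on c set0.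
Proof. by case=> phi; rewrite hat0 => -[]. Qed.

Lemma attacks_on_subset (c : argument Form) (T T' : set Form) :
  hat_monotone -> finite_set T' -> T `<=` T' ->
  attacks_on c T -> attacks_on c T'.
Proof.
move=> hmono fT' TT' [phi [hphi bphi]]; exists phi; split=> //.
have fT : finite_set T := sub_finite_set TT' fT'.
by rewrite -(setUidr TT'); apply: hmono.
Qed.

Lemma Arg_der (S S' : set Form) (psi : Form) :
  S' `<=` S -> der st S' psi -> Arg st S (S', psi).
Proof. by move=> SS' dS'; split; [apply: der_fin dS' | split]. Qed.

Lemma Atoms_subset (A B : set Form) :
  A `<=` B -> Atoms atoms A `<=` Atoms atoms B.
Proof. exact: bigcup_subset. Qed.

Lemma primeness_attack (S1 S2 T1 T2 : set Form) (b : argument Form) :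
  primeness -> atom_disjoint atoms S1 S2 ->
  finite_set T1 -> finite_set T2 ->
  Atoms atoms T1 `<=` Atoms atoms S1 -> Atoms atoms T2 `<=` Atoms atoms S2 ->
  Arg st (S1 `|` S2) b -> attacks_on b (T1 `|` T2) ->
  (exists b', Arg st (S1 `&` Supp b) b' /\ attacks_on b' T1) \/
  (exists b', Arg st (S2 `&` Supp b) b' /\ attacks_on b' T2).
Proof.
move=> hprime hdisj fT1 fT2 AT1 AT2 [fb [sb db]] [phi [hphi bphi]].
have fSb (S : set Form) : finite_set (S `&` Supp b) by apply: finite_setIr.
have ASb (S : set Form) : Atoms atoms (S `&` Supp b) `<=` Atoms atoms S.
  by apply: Atoms_subset => x [].
have Sb_split : (S1 `&` Supp b) `|` (S2 `&` Supp b) = b.1.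
  by rewrite -setIUl setIidr.
rewrite -Sb_split in db.
have [[S' [phi' [psi' [S'sub [hphi' [bphi' dS']]]]]]
     |[S' [phi' [psi' [S'sub [hphi' [bphi' dS']]]]]]] :=
  hprime _ _ _ _ _ _ _ _ hdisj (fSb S1) fT1 (fSb S2) fT2
    (ASb S1) AT1 (ASb S2) AT2 bphi hphi db.
- by left; exists (S', psi'); split; [apply: Arg_der | exists phi'].
- by right; exists (S', psi'); split; [apply: Arg_der | exists phi'].
Qed.

End Relevance.

Theorem lemma4 (Atom Form : Type) (atoms : Form -> set Atom)
  (st : setting Form)
  (hPR : pre_relevance atoms st)
  (S1 S2 : set Form) (hdisj : atom_disjoint atoms S1 S2)
  (a b : argument Form)
  (ha : Arg st (S1 `|` S2) a) (hb : Arg st (S1 `|` S2) b)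
  (hatt : attacks st b a) :
  (exists b' : argument Form,
      (Arg st (S1 `&` Supp b) b' \/ Arg st (S2 `&` Supp b) b') /\
      attacks st b' a) /\
  (Arg st S1 a ->
   exists b' : argument Form, Arg st (S1 `&` Supp b) b' /\ attacks st b' a).
Proof.
have hprime := pre_relevance_primeness hPR.
have hmono := pre_relevance_hat_monotone hPR.
have [fa [sa _]] := ha.
rewrite attacksE in hatt; split.
- have Sa_split : (Supp a `&` S1) `|` (Supp a `&` S2) = Supp a.
    by rewrite -setIUr setIidl.
  rewrite -Sa_split in hatt.
  have [[b' [hb' att']] | [b' [hb' att']]] :=
    primeness_attack hprime hdisj (finite_setIl _ fa) (finite_setIl _ fa)
      (Atoms_subset (@subIsetr _ _ _)) (Atoms_subset (@subIsetr _ _ _)) hb hatt.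
  + exists b'; split; first by left.
    by rewrite attacksE; apply: attacks_on_subset att' => // x [].
  + exists b'; split; first by right.
    by rewrite attacksE; apply: attacks_on_subset att' => // x [].
- move=> [_ [sa1 _]]; rewrite -[Supp a]setU0 in hatt.
  have [[b' [hb' att']] | [b' [_ /attacks_on_set0 []]]] :=
    primeness_attack hprime hdisj fa (finite_set0 _) (Atoms_subset sa1)
      (Atoms_subset (@sub0set _ _)) hb hatt.
  by exists b'.
Qed.
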